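(* Let $n\ge 2$ and $\ell\ge 2$ be integers, let $G=\mathbb{Z}_{\ell^n-(\ell-1)^n}$, and let $\alpha=\ell(\ell-1)^{-1}\in G$. Let $L=(\ell,\ell,\dots,\ell)\in\mathbb{Z}^n$ and $K=(\ell-1,\ell-1,\dots,\ell-1)\in\mathbb{Z}^n$. Then $\mathcal{S}_{L,K}$ splits $G$ with the splitting sequence $\beta=\beta_1,\dots,\beta_n$ defined by $\beta_i=\alpha^{i-1}$, $1\le i\le n$.
   Context: $\mathbb{Z}_m$ is the ring of integers modulo $m$ (here $\ell-1$ is invertible in it). For integer vectors $L,K$ with $0<k_i<\ell_i$, the discrete $n$-dimensional chair is $\mathcal{S}_{L,K}=\{(x_1,\dots,x_n)\in\mathbb{Z}^n: 0\le x_i<\ell_i \text{ for all } i, \text{ and there exists } j \text{ with } x_j<\ell_j-k_j\}$. For an Abelian group $G$, a sequence $\beta=\beta_1,\dots,\beta_n$ in $G$ and $X\in\mathbb{Z}^n$, $X\cdot\beta=\sum_i x_i\beta_i$. A finite set $\mathcal{S}\subset\mathbb{Z}^n$ splits $G$ with splitting sequence $\beta$ if $\{\mathcal{E}\cdot\beta:\mathcal{E}\in\mathcal{S}\}$ consists of $|\mathcal{S}|$ distinct elements of $G$. *)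

From mathcomp Require Import all_boot all_order all_algebra.
Set Implicit Arguments. Unset Strict Implicit. Unset Printing Implicit Defensive.
Import GRing.Theory.
Local Open Scope ring_scope.

Definition chair (n : nat) (L K : 'I_n -> int) (X : 'I_n -> int) : Prop :=
  (forall i, 0 <= X i < L i) /\ (exists j, X j < L j - K j).

Definition dotG (G : zmodType) (n : nat) (X : 'I_n -> int) (beta : 'I_n -> G) : G :=
  \sum_(i < n) beta i *~ X i.

Definition splits (G : zmodType) (n : nat) (S : ('I_n -> int) -> Prop)
    (beta : 'I_n -> G) : Prop :=
  forall X Y, S X -> S Y -> dotG X beta = dotG Y beta -> forall i, X i = Y i.

From mathcomp Require Import all_boot all_order all_algebra.
From mathcomp Require Import ring zify.
Set Implicit Arguments. Unset Strict Implicit. Unset Printing Implicit Defensive.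
Import Order.TTheory GRing.Theory Num.Theory.
Local Open Scope ring_scope.

(* Put c = l - 1, m = l^n - c^n and let D be the n-periodic extension of X - Y.
   Multiplying X.beta = Y.beta by c^(n-1) shows that m divides the window sum
   W_(n-1), where W_k = sum_(j<n) D_(k+1+j) l^j c^(n-1-j).  Since
   l W_(k+1) - c W_k = m D_(k+1) and c is prime to m, every W_k = m A_k, and
   then D_(k+1) = l A_(k+1) - c A_k with |D| <= c.  The periodic sequence A must
   be constant: where it rises to its maximum that maximum is <= 0, where it
   falls to its minimum that minimum is >= 0.  So D is constant, and the chair
   condition (some X_j = 0 and some Y_j' = 0) forces D = 0. *)

Section Periodic.
Variables (T : Type) (A : nat -> T) (n : nat).
Hypothesis A_periodic : forall t, A (t + n)%N = A t.

Lemma periodic_addnM t k : A (t + k * n)%N = A t.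
Proof. by elim: k => [|k IH]; rewrite ?addn0 // mulSn addnCA addnC A_periodic. Qed.

Lemma periodic_modn t : A t = A (t %% n)%N.
Proof. by rewrite {1}(divn_eq t n) addnC periodic_addnM. Qed.

End Periodic.

Section PeriodicMaximum.
Context {disp : Order.disp_t} {T : orderType disp}.
Variables (A : nat -> T) (n : nat).
Hypothesis n_gt0 : (0 < n)%N.
Hypothesis A_periodic : forall t, A (t + n)%N = A t.

Lemma periodic_has_max : exists r, forall t, (A t <= A r)%O.
Proof.
have [r _ r_max] := @arg_maxP _ _ _ (Ordinal n_gt0) xpredT (fun i : 'I_n => A i) isT.
exists r => t; rewrite (periodic_modn A_periodic); exact: (r_max (Ordinal (ltn_pmod t n_gt0))).
Qed.

Lemma periodic_rise_to_max r p :
  (forall t, A t <= A r)%O -> (A p < A r)%O ->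
  exists t, (A t < A t.+1)%O /\ A t.+1 = A r.
Proof.
move=> r_max lt_pr.
have r_again : exists t, (p < t)%N && (A t == A r).
  by exists (r + p.+1 * n)%N; rewrite (periodic_addnM A_periodic) eqxx andbT; nia.
have [[|t] /andP[lt_pt /eqP At] t_min] := ex_minnP r_again; first by [].
exists t; split=> //; rewrite At; have [-> //|ne_tp] := eqVneq t p.
rewrite lt_neqAle r_max andbT eq_sym; apply/eqP => Atr.
have lt_pt' : (p < t)%N by lia.
by have := t_min t; rewrite lt_pt' Atr eqxx ltnn => /(_ isT).
Qed.
End PeriodicMaximum.

Lemma periodic_recurrence_const (A D : nat -> int) n (c : int) : (0 < n)%N ->
  (forall t, A (t + n)%N = A t) ->
  (forall t, D t.+1 = (c + 1) * A t.+1 - c * A t) ->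
  (forall t, `|D t| <= c) -> forall t, A t = A 0%N.
Proof.
move=> n_gt0 A_periodic D_rec D_bound.
have rise t : A t < A t.+1 -> A t.+1 <= 0.
  by move=> lt_t; have := D_bound t.+1; rewrite D_rec; nia.
have fall t : A t.+1 < A t -> 0 <= A t.+1.
  by move=> lt_t; have := D_bound t.+1; rewrite D_rec; nia.
have [r r_max] := periodic_has_max n_gt0 A_periodic.
have opp_periodic t : - A (t + n)%N = - A t by rewrite A_periodic.
have [s s_min] := periodic_has_max n_gt0 opp_periodic.
have [lt_sr|le_rs] := ltP (A s) (A r); last first.
  by move=> t; have := r_max t; have := s_min t; have := r_max 0%N; have := s_min 0%N; lia.
have [t [/rise Ar_le0 Atr]] := periodic_rise_to_max n_gt0 A_periodic r_max lt_sr.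
have lt_opp : - A r < - A s by rewrite ltrN2.
have [u []] := periodic_rise_to_max n_gt0 opp_periodic s_min lt_opp.
rewrite ltrN2 => /fall Au_ge0 /oppr_inj Aus; exfalso.
by rewrite Atr in Ar_le0; rewrite Aus in Au_ge0; lia.
Qed.

(* u^(n-1) p(a/u) for the polynomial p with coefficients d, without dividing. *)
Definition homog_eval (R : comPzRingType) n (d : 'I_n -> R) (a u : R) : R :=
  \sum_(i < n) d i * a ^+ i * u ^+ (n.-1 - i).

Lemma rmorph_homog_eval (R S : comPzRingType) (f : {rmorphism R -> S}) n
    (d : 'I_n -> R) (a u : R) :
  f (homog_eval d a u) = homog_eval (f \o d) (f a) (f u).
Proof. by rewrite rmorph_sum; apply: eq_bigr => i _; rewrite !rmorphM !rmorphXn. Qed.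

Lemma homog_eval_dotG (R : comUnitRingType) n (d : 'I_n -> int) (a u : R) :
  u \is a GRing.unit ->
  homog_eval (fun i => (d i)%:~R) a u = u ^+ n.-1 * dotG d (fun i => (a / u) ^+ i).
Proof.
move=> u_unit; rewrite /dotG mulr_sumr; apply: eq_bigr => i _.
have le_in : (i <= n.-1)%N by rewrite -ltnS (leq_trans (ltn_ord i)) // leqSpred.
have uK : u ^+ i * u^-1 ^+ i = 1 by rewrite -exprMn (mulrV u_unit) expr1n.
rewrite -{2}(subnK le_in) exprD exprMn -mulrzr -[LHS]mul1r -{1}uK.
ring.
Qed.

Lemma dotGB (G : zmodType) n (X Y : 'I_n -> int) (beta : 'I_n -> G) :
  dotG (fun i => X i - Y i) beta = dotG X beta - dotG Y beta.
Proof. by rewrite /dotG -sumrB; apply: eq_bigr => i _; rewrite mulrzBr. Qed.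

Section CyclicExtension.
Variables (T : Type) (x0 : T) (n : nat) (d : 'I_n -> T).

Definition cyclic_ext (t : nat) : T := oapp d x0 (insub (t %% n)%N).

Lemma cyclic_ext_periodic t : cyclic_ext (t + n) = cyclic_ext t.
Proof. by rewrite /cyclic_ext modnDr. Qed.

Lemma cyclic_ext_ord (i : 'I_n) : cyclic_ext i = d i.
Proof. by rewrite /cyclic_ext modn_small // valK. Qed.

Lemma all_cyclic_ext (P : pred T) : P x0 -> (forall i, P (d i)) ->
  forall t, P (cyclic_ext t).
Proof. by move=> P0 Pd t; rewrite /cyclic_ext; case: insub. Qed.

End CyclicExtension.

Section Window.
Variables (D : nat -> int) (n : nat) (l c : int).
Hypothesis n_gt0 : (0 < n)%N.
Hypothesis D_periodic : forall t, D (t + n)%N = D t.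

Definition window (k : nat) : int := homog_eval (fun j : 'I_n => D (k.+1 + j)) l c.

Lemma window_periodic k : window (k + n) = window k.
Proof.
by apply: eq_bigr => j _; rewrite -addSn -addnA (addnC n) addnA D_periodic.
Qed.

Lemma window_succ k :
  l * window k.+1 - c * window k = (l ^+ n - c ^+ n) * D k.+1.
Proof.
pose F j := D (k.+1 + j)%N * l ^+ j * c ^+ (n - j).
have lwin : l * window k.+1 = \sum_(j < n) F j.+1.
  rewrite mulr_sumr; apply: eq_bigr => j _; rewrite /F addSnnS.
  have -> : (n.-1 - j = n - j.+1)%N by lia.
  by rewrite exprS; ring.
have cwin : c * window k = \sum_(j < n) F j.
  rewrite mulr_sumr; apply: eq_bigr => j _; rewrite /F.
  have -> : (n - j = (n.-1 - j).+1)%N by have := ltn_ord j; lia.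
  by rewrite exprS; ring.
have telescope : \sum_(j < n) F j.+1 = \sum_(j < n) F j + F n - F 0%N.
  have recl : \sum_(j < n.+1) F j = F 0%N + \sum_(j < n) F j.+1 by rewrite big_ord_recl.
  have recr : \sum_(j < n.+1) F j = \sum_(j < n) F j + F n by rewrite big_ord_recr.
  by rewrite -recr recl; ring.
rewrite lwin cwin telescope /F addn0 D_periodic subnn subn0; ring.
Qed.

Hypothesis coprime_diff_c : coprimez (l ^+ n - c ^+ n) c.

Lemma window_dvd_pred k :
  (l ^+ n - c ^+ n %| window k.+1)%Z -> (l ^+ n - c ^+ n %| window k)%Z.
Proof.
move=> dvd_succ; rewrite -(Gauss_dvdzl _ coprime_diff_c).
have -> : window k * c = l * window k.+1 - (l ^+ n - c ^+ n) * D k.+1.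
  by rewrite -window_succ; ring.
by apply: rpredB; [exact: dvdz_mull | exact: dvdz_mulr].
Qed.

Lemma window_dvd_all :
  (l ^+ n - c ^+ n %| window n.-1)%Z -> forall k, (l ^+ n - c ^+ n %| window k)%Z.
Proof.
move=> dvd_last k; pose N := (n.-1 + k * n)%N.
have dvd_down s : (s <= N)%N -> (l ^+ n - c ^+ n %| window (N - s))%Z.
  elim: s => [_|s IH lt_sN]; first by rewrite subn0 periodic_addnM //; apply: window_periodic.
  apply: (@window_dvd_pred (N - s.+1)%N).
  by rewrite -subSn // subSS IH // ltnW.
have le_kN : (k <= N)%N by rewrite /N; nia.
by have := dvd_down (N - k)%N (leq_subr k N); rewrite subKn.
Qed.

Hypothesis l_eq : l = c + 1.
Hypothesis D_bound : forall t, `|D t| <= c.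

Lemma window_dvd_const :
  (l ^+ n - c ^+ n %| window n.-1)%Z -> forall t, D t = D 0%N.
Proof.
move=> dvd_last; pose m := l ^+ n - c ^+ n; pose A k := (window k %/ m)%Z.
have m_neq0 : m != 0.
  have c_ge0 : 0 <= c by apply: le_trans (D_bound 0%N).
  by rewrite subr_eq0 eq_sym lt_eqF // l_eq ltrXn2r ?ltrDl // -lt0n.
have windowE k : window k = A k * m by rewrite divzK // window_dvd_all.
have A_periodic t : A (t + n)%N = A t by rewrite /A window_periodic.
have D_rec t : D t.+1 = (c + 1) * A t.+1 - c * A t.
  apply: (mulfI m_neq0); have := window_succ t; rewrite !windowE => <-; rewrite l_eq; ring.
have A_const := periodic_recurrence_const n_gt0 A_periodic D_rec D_bound.
have D_A0 t : D t = A 0%N.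
  rewrite -D_periodic (_ : (t + n = (t + n.-1).+1)%N); last by lia.
  by rewrite D_rec !A_const; ring.
by move=> t; rewrite !D_A0.
Qed.

End Window.

Lemma window_cyclic_ext_last n (d : 'I_n -> int) (l c : int) : (0 < n)%N ->
  window (cyclic_ext 0 d) n l c n.-1 = homog_eval d l c.
Proof.
move=> n_gt0; apply: eq_bigr => j _.
by rewrite prednK // addnC cyclic_ext_periodic cyclic_ext_ord.
Qed.

Lemma Zp_nat_eq0_dvdn (m k : nat) : (1 < m)%N -> (k%:R : 'Z_m) = 0 -> (m %| k)%N.
Proof. by move=> m_gt1 /(congr1 val); rewrite /= val_Zp_nat // => /eqP. Qed.

Lemma Zp_intr_eq0_dvdz (m : nat) (W : int) : (1 < m)%N ->
  (W%:~R : 'Z_m) = 0 -> (m%:Z %| W)%Z.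
Proof.
move=> m_gt1; rewrite dvdzE /=; case: W => k /=; first exact: Zp_nat_eq0_dvdn.
by rewrite NegzE mulrNz => /eqP; rewrite oppr_eq0 => /eqP /Zp_nat_eq0_dvdn; apply.
Qed.

Lemma coprime_succX_subX c n : (0 < n)%N -> coprime c (c.+1 ^ n - c ^ n).
Proof.
case: n => // n _; rewrite /coprime -(gcdnMDl (c ^ n)) -expnSr addnC subnK.
  by rewrite -/(coprime _ _) coprimeXr // coprimenS.
by rewrite leq_exp2r.
Qed.

Lemma succX_subX_gt1 c n : (0 < c)%N -> (1 < n)%N -> (1 < c.+1 ^ n - c ^ n)%N.
Proof.
move=> c_gt0; case: n => [|[|p]] // _.
have le_cX : (c ^ p.+1 <= c.+1 ^ p.+1)%N by rewrite leq_exp2r.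
have le_X : (c.+1 <= c.+1 ^ p.+1)%N by rewrite -{1}(expn1 c.+1) leq_pexp2l.
by rewrite !(expnS _ p.+1); nia.
Qed.

Theorem mainTheorem3 (n l : nat) (hn : (2 <= n)%N) (hl : (2 <= l)%N) :
  let m := (l ^ n - (l - 1) ^ n)%N in
  let alpha : 'Z_m := (l%:R : 'Z_m) * ((l - 1)%N%:R : 'Z_m)^-1 in
  splits (chair (fun _ : 'I_n => (l%:Z)) (fun _ : 'I_n => ((l - 1)%N)%:Z))
         (fun i : 'I_n => alpha ^+ (val i)).
Proof.
move=> m alpha X Y [X_bound [j Xj]] [Y_bound [j' Yj']] eq_dot i.
have n_gt0 : (0 < n)%N by apply: leq_trans hn.
move: eq_dot; rewrite /alpha /m; clear alpha m.
set c := (l - 1)%N; set m := (l ^ n - c ^ n)%N => eq_dot.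
have l_eq : l = c.+1 by rewrite /c subn1 prednK // ltnW.
pose d k := X k - Y k; pose D := cyclic_ext 0 d.
have m_def : m%:Z = l%:Z ^+ n - c%:Z ^+ n.
  by rewrite /m -subzn ?l_eq ?leq_exp2r // -!natz !natrX.
have m_gt1 : (1 < m)%N by rewrite /m l_eq succX_subX_gt1 // -ltnS -l_eq.
have c_unit : (c%:R : 'Z_m) \is a GRing.unit.
  by rewrite unitZpE // coprime_sym /m l_eq coprime_succX_subX.
have D_bound t : `|D t| <= c%:Z.
  apply: (all_cyclic_ext (P := fun x => `|x| <= c%:Z)) => // k.
  by have := X_bound k; have := Y_bound k; rewrite /d l_eq; lia.
have coprime_mc : coprimez (l%:Z ^+ n - c%:Z ^+ n) c.
  by rewrite -m_def coprimezE !absz_nat coprime_sym /m l_eq coprime_succX_subX.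
have dvd_last : (l%:Z ^+ n - c%:Z ^+ n %| window D n l c n.-1)%Z.
  rewrite -m_def window_cyclic_ext_last //; apply: Zp_intr_eq0_dvdz => //.
  by rewrite rmorph_homog_eval homog_eval_dotG // dotGB eq_dot subrr mulr0.
have l_eqZ : l%:Z = c%:Z + 1 by rewrite l_eq; lia.
have D_const := window_dvd_const n_gt0 (cyclic_ext_periodic 0 d) coprime_mc l_eqZ D_bound dvd_last.
have := D_const i; have := D_const j; have := D_const j'; rewrite !cyclic_ext_ord /d.
by have := X_bound j'; have := Y_bound j; lia.
Qed.
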